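(* The following $\Re$-modules are pairwise non-isomorphic: $R_{\frac{n-1}{2}}(-\frac14,-\frac14,-\frac14)$ for all odd $n\ge1$; $R_{\frac{n-2}{4}}(\frac{n-2}{8},\frac{n-2}{8},\frac{n-6}{8})$, $R_{\frac{n-2}{4}}(\frac{n-2}{8},\frac{n-6}{8},\frac{n-2}{8})$, $R_{\frac{n-2}{4}}(\frac{n-6}{8},\frac{n-2}{8},\frac{n-2}{8})$ for all $n\ge2$ with $n\equiv2\pmod4$; $R_{\frac{n-6}{4}}(\frac{n-2}{8},\frac{n-2}{8},\frac{n-2}{8})$ for all $n\ge6$ with $n\equiv2\pmod4$; $R_{\frac n4-1}(\frac{n-4}{8},\frac{n-4}{8},\frac n8)$, $R_{\frac n4-1}(\frac{n-4}{8},\frac n8,\frac{n-4}{8})$, $R_{\frac n4-1}(\frac n8,\frac{n-4}{8},\frac{n-4}{8})$ for all $n\ge4$ with $n\equiv0\pmod4$; $R_{\frac n4}(\frac{n-4}{8},\frac{n-4}{8},\frac{n-4}{8})$ for all $n\ge0$ with $n\equiv0\pmod4$.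
   Context: $\Re$ is the unital associative $\mathbb C$-algebra generated by $A,B,C,\Delta$ with $[A,B]=[B,C]=[C,A]=2\Delta$ and such that $\alpha=[A,\Delta]+AC-BA$, $\beta=[B,\Delta]+BA-CB$, $\gamma=[C,\Delta]+CB-AC$ are central; $\delta=A+B+C$. For $a,b,c\in\mathbb C$, $d\in\mathbb N$, $R_d(a,b,c)$ is the $(d+1)$-dimensional $\Re$-module (determined up to isomorphism) with a basis in which $A$ is lower bidiagonal with diagonal $\theta_i=(a+\frac d2-i)(a+\frac d2-i+1)$ ($0\le i\le d$) and subdiagonal entries $1$, $B$ is upper bidiagonal with diagonal $\theta^*_i=(b+\frac d2-i)(b+\frac d2-i+1)$ and superdiagonal $\varphi_i=i(i-d-1)(a+b+c+\frac d2-i+2)(a+b-c+\frac d2-i+1)$ ($1\le i\le d$), and $\alpha,\beta,\gamma,\delta$ act as the scalars $(c-b)(c+b+1)(a-\frac d2)(a+\frac d2+1)$, $(a-c)(a+c+1)(b-\frac d2)(b+\frac d2+1)$, $(b-a)(b+a+1)(c-\frac d2)(c+\frac d2+1)$, $\frac d2(\frac d2+1)+a(a+1)+b(b+1)+c(c+1)$. *)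

From HB Require Import structures.
From mathcomp Require Import all_boot all_order all_algebra.
Set Implicit Arguments. Unset Strict Implicit. Unset Printing Implicit Defensive.
Import Order.TTheory GRing.Theory Num.Theory.
Local Open Scope ring_scope.

(* The (d+1)-dimensional Re-module R_d(a,b,c), given by the matrices through
   which the generators A, B, C, Delta act (in the basis of the paper). *)
Section Rmod.
Variable F : numClosedFieldType.

Definition theta (x : F) (d i : nat) : F :=
  (x + d%:R / 2 - i%:R) * (x + d%:R / 2 - i%:R + 1).

Definition phiR (a b c : F) (d i : nat) : F :=
  i%:R * (i%:R - d%:R - 1) * (a + b + c + d%:R / 2 - i%:R + 2)
    * (a + b - c + d%:R / 2 - i%:R + 1).

Definition RA (d : nat) (a b c : F) : 'M[F]_(d.+1) :=
  \matrix_(i, j) (if i == j :> nat then theta a d i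
                  else if i == j.+1 :> nat then 1 else 0).

(* B: upper bidiagonal, diagonal theta*_i, superdiagonal phi_i
   (entry (i-1,i) equals phi_i, 1 <= i <= d) *)
Definition RB (d : nat) (a b c : F) : 'M[F]_(d.+1) :=
  \matrix_(i, j) (if i == j :> nat then theta b d i
                  else if j == i.+1 :> nat then phiR a b c d j else 0).

(* the scalar by which the central element delta = A + B + C acts *)
Definition Rdelta (d : nat) (a b c : F) : F :=
  d%:R / 2 * (d%:R / 2 + 1) + a * (a + 1) + b * (b + 1) + c * (c + 1).

Definition RC (d : nat) (a b c : F) : 'M[F]_(d.+1) :=
  (Rdelta d a b c)%:M - RA d a b c - RB d a b c.

Definition RD (d : nat) (a b c : F) : 'M[F]_(d.+1) :=
  2^-1 *: (RA d a b c *m RB d a b c - RB d a b c *m RA d a b c).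

Definition Riso (d1 : nat) (a1 b1 c1 : F) (d2 : nat) (a2 b2 c2 : F) : Prop :=
  exists (P : 'M[F]_(d1.+1, d2.+1)) (Q : 'M[F]_(d2.+1, d1.+1)),
    P *m Q = 1%:M /\ Q *m P = 1%:M /\
    RA d1 a1 b1 c1 *m P = P *m RA d2 a2 b2 c2 /\
    RB d1 a1 b1 c1 *m P = P *m RB d2 a2 b2 c2 /\
    RC d1 a1 b1 c1 *m P = P *m RC d2 a2 b2 c2 /\
    RD d1 a1 b1 c1 *m P = P *m RD d2 a2 b2 c2.
End Rmod.

(* The nine families of Proposition 7.7, in the order listed in the paper. *)
Inductive rfam :=
  | Fam1 | Fam2a | Fam2b | Fam2c | Fam3 | Fam4a | Fam4b | Fam4c | Fam5.

Definition fam_valid (f : rfam) (n : nat) : bool :=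
  match f with
  | Fam1 => odd n
  | Fam2a | Fam2b | Fam2c => n %% 4 == 2
  | Fam3 => (6 <= n) && (n %% 4 == 2)
  | Fam4a | Fam4b | Fam4c => (4 <= n) && (n %% 4 == 0)
  | Fam5 => n %% 4 == 0
  end%N.

(* the dimension parameter d (exact division for admissible n) *)
Definition fam_d (f : rfam) (n : nat) : nat :=
  match f with
  | Fam1 => (n - 1) %/ 2
  | Fam2a | Fam2b | Fam2c => (n - 2) %/ 4
  | Fam3 => (n - 6) %/ 4
  | Fam4a | Fam4b | Fam4c => n %/ 4 - 1
  | Fam5 => n %/ 4
  end%N.

Definition fam_abc (F : numClosedFieldType) (f : rfam) (n : nat) : F * F * F :=
  let p := (n%:R - 2) / 8 in
  let q := (n%:R - 6) / 8 in
  let r := (n%:R - 4) / 8 in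
  let s := n%:R / 8 in
  match f with
  | Fam1 => (- 4^-1, - 4^-1, - 4^-1)
  | Fam2a => (p, p, q)
  | Fam2b => (p, q, p)
  | Fam2c => (q, p, p)
  | Fam3 => (p, p, p)
  | Fam4a => (r, r, s)
  | Fam4b => (r, s, r)
  | Fam4c => (s, r, r)
  | Fam5 => (r, r, r)
  end.

Definition fam_iso (F : numClosedFieldType) (f1 : rfam) (n1 : nat)
    (f2 : rfam) (n2 : nat) : Prop :=
  let: (a1, b1, c1) := fam_abc F f1 n1 in
  let: (a2, b2, c2) := fam_abc F f2 n2 in
  Riso (fam_d f1 n1) a1 b1 c1 (fam_d f2 n2) a2 b2 c2.

(* An isomorphism of R-modules is a similarity of the matrices of A, B and C,
   so it preserves the dimension d + 1 and the three traces.  In dimension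
   d + 1 the trace of A is (d + 1) a (a + 1) plus a constant depending only on
   d, and likewise for B with b and for C with c (using C = delta - A - B).
   Hence isomorphic modules share d and the values (4x + 2)^2 at x = a, b, c.
   For the listed modules these values are 1, (2d)^2, (2d + 2)^2 or
   (2d + 4)^2, and the pattern they form identifies the family, while d
   identifies n within a family. *)

From mathcomp Require Import all_boot all_order all_algebra.
From mathcomp Require Import ring zify.
Set Implicit Arguments. Unset Strict Implicit. Unset Printing Implicit Defensive.
Import Order.TTheory GRing.Theory Num.Theory.
Local Open Scope ring_scope.

Lemma mxtrace_intertwine (R : comPzRingType) m n (P : 'M[R]_(m, n)) Q
    (A : 'M_m) (B : 'M_n) :
  P *m Q = 1%:M -> Q *m P = 1%:M -> A *m P = P *m B -> \tr A = \tr B.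
Proof.
move=> PQ QP AP.
by rewrite -[A]mulmx1 -PQ mulmxA AP -mulmxA mxtrace_mulC -mulmxA QP mulmx1.
Qed.

Lemma mx_inverse_dim (R : numDomainType) m n (P : 'M[R]_(m, n)) Q :
  P *m Q = 1%:M -> Q *m P = 1%:M -> m = n.
Proof.
move=> PQ QP; apply/eqP; rewrite -(eqr_nat R) -[m%:R]mxtrace1 -[n%:R]mxtrace1.
by rewrite -PQ -QP mxtrace_mulC.
Qed.

Lemma sum_centered (R : numFieldType) d :
  \sum_(i < d.+1) (d%:R / 2 - i%:R : R) = 0.
Proof.
have S_opp : \sum_(i < d.+1) (d%:R / 2 - i%:R : R)
    = - \sum_(i < d.+1) (d%:R / 2 - i%:R : R).
  rewrite {1}(reindex_inj rev_ord_inj) /= -sumrN; apply: eq_bigr => i _.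
  by rewrite subSS natrB -1?ltnS //; field.
by move/eqP: S_opp; rewrite -subr_eq0 opprK -mulr2n mulrn_eq0 => /orP[|/eqP].
Qed.

Section Traces.
Variable F : numClosedFieldType.
Implicit Types (a b c x : F) (d : nat).

Definition theta_sum d : F := \sum_(i < d.+1) theta 0 d i.

Lemma sum_theta x d :
  \sum_(i < d.+1) theta x d i = d.+1%:R * (x * (x + 1)) + theta_sum d.
Proof.
have split_theta i : theta x d i
    = x * (x + 1) + theta 0 d i + 2 * x * (d%:R / 2 - i%:R).
  by rewrite /theta; ring.
under eq_bigr => i _ do rewrite split_theta.
by rewrite !big_split /= sumr_const card_ord -mulr_sumr sum_centered mulr0 addr0
  mulr_natl.
Qed.

Lemma mxtrace_RA d a b c :
  \tr (RA d a b c) = d.+1%:R * (a * (a + 1)) + theta_sum d.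
Proof. by rewrite -sum_theta; apply: eq_bigr => i _; rewrite mxE eqxx. Qed.

Lemma mxtrace_RB d a b c :
  \tr (RB d a b c) = d.+1%:R * (b * (b + 1)) + theta_sum d.
Proof. by rewrite -sum_theta; apply: eq_bigr => i _; rewrite mxE eqxx. Qed.

Lemma mxtrace_RC d a b c :
  \tr (RC d a b c) = d.+1%:R * (c * (c + 1))
    + (d.+1%:R * (d%:R / 2 * (d%:R / 2 + 1)) - 2 * theta_sum d).
Proof.
rewrite /RC !raddfB /= mxtrace_scalar mxtrace_RA mxtrace_RB /Rdelta -mulr_natl.
ring.
Qed.

Lemma Riso_invariants d1 a1 b1 c1 d2 a2 b2 c2 :
  Riso d1 a1 b1 c1 d2 a2 b2 c2 ->
  [/\ d1 = d2, a1 * (a1 + 1) = a2 * (a2 + 1), b1 * (b1 + 1) = b2 * (b2 + 1)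
    & c1 * (c1 + 1) = c2 * (c2 + 1)].
Proof.
case=> P [Q [PQ [QP [tA [tB [tC _]]]]]].
have [ed] := mx_inverse_dim PQ QP.
move: (mxtrace_intertwine PQ QP tA) (mxtrace_intertwine PQ QP tB)
  (mxtrace_intertwine PQ QP tC); clear P Q PQ QP tA tB tC; subst d2.
rewrite !mxtrace_RA !mxtrace_RB !mxtrace_RC.
have cancel_dim u v k : d1.+1%:R * u + k = d1.+1%:R * v + k -> u = v :> F.
  by move/addIr/mulfI; apply; rewrite pnatr_eq0.
by move=> /cancel_dim ea /cancel_dim eb /cancel_dim ec.
Qed.

End Traces.

Definition fam_n (f : rfam) (m : nat) : nat :=
  match f with
  | Fam1 => 2 * m + 1
  | Fam2a | Fam2b | Fam2c => 4 * m + 2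
  | Fam3 => 4 * m + 6
  | Fam4a | Fam4b | Fam4c => 4 * m + 4
  | Fam5 => 4 * m
  end%N.

Lemma fam_dK f n : fam_valid f n -> fam_n f (fam_d f n) = n.
Proof. by case: f => /=; lia. Qed.

Lemma fam_d_inj f n1 n2 :
  fam_valid f n1 -> fam_valid f n2 -> fam_d f n1 = fam_d f n2 -> n1 = n2.
Proof. by move=> /fam_dK {2}<- /fam_dK {2}<- ->. Qed.

Definition fam_weights (f : rfam) (m : nat) : nat * nat * nat :=
  let lo := ((2 * m) ^ 2)%N in
  let mid := ((2 * m + 2) ^ 2)%N in
  let hi := ((2 * m + 4) ^ 2)%N in
  match f with
  | Fam1 => (1, 1, 1)
  | Fam2a => (mid, mid, lo)
  | Fam2b => (mid, lo, mid)
  | Fam2c => (lo, mid, mid)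
  | Fam3 => (hi, hi, hi)
  | Fam4a => (mid, mid, hi)
  | Fam4b => (mid, hi, mid)
  | Fam4c => (hi, mid, mid)
  | Fam5 => (lo, lo, lo)
  end%N.

Lemma fam_weights_inj m : injective (fam_weights ^~ m).
Proof. by case; case => //= -[]; lia. Qed.


Section Weights.
Variable R : comPzRingType.

Definition weight (x : R) : R := (4 * x + 2) ^+ 2.

Lemma weight_casimir x y : x * (x + 1) = y * (y + 1) -> weight x = weight y.
Proof.
have weightE z : weight z = 16 * (z * (z + 1)) + 4 by rewrite /weight; ring.
by rewrite !weightE => ->.
Qed.

Definition weights (t : R * R * R) := (weight t.1.1, weight t.1.2, weight t.2).

End Weights.

Definition natr3 (R : numDomainType) (t : nat * nat * nat) : R * R * R :=
  (t.1.1%:R, t.1.2%:R, t.2%:R).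

Lemma natr3_inj (R : numDomainType) : injective (@natr3 R).
Proof.
move=> [[? ?] ?] [[? ?] ?] [/eqP + /eqP + /eqP].
by rewrite !eqr_nat => /eqP-> /eqP-> /eqP->.
Qed.

Lemma fam_abc_weights (F : numClosedFieldType) f n :
  fam_valid f n -> weights (fam_abc F f n) = natr3 F (fam_weights f (fam_d f n)).
Proof.
move=> /fam_dK; move: (fam_d f n) => m <-.
by case: f; rewrite /fam_abc /weights /weight /natr3 /= ?(natrD, natrM, natrX);
  congr (_, _, _); field.
Qed.

Theorem proposition7p7 (F : numClosedFieldType) (f1 f2 : rfam) (n1 n2 : nat) :
  fam_valid f1 n1 -> fam_valid f2 n2 -> (f1, n1) <> (f2, n2) ->
  ~ fam_iso F f1 n1 f2 n2.
Proof.
move=> V1 V2 ne12; rewrite /fam_iso.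
have W1 := fam_abc_weights F V1; have W2 := fam_abc_weights F V2.
case: (fam_abc F f1 n1) W1 => [[a1 b1] c1] W1.
case: (fam_abc F f2 n2) W2 => [[a2 b2] c2] W2.
case/Riso_invariants=> ed ea eb ec.
have ef : f1 = f2.
  apply: (@fam_weights_inj (fam_d f1 n1)); apply: (@natr3_inj F).
  by rewrite /= -W1 {}ed -W2 /weights /= (weight_casimir ea) (weight_casimir eb)
    (weight_casimir ec).
by subst f2; apply: ne12; rewrite (fam_d_inj V1 V2 ed).
Qed.
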